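(* Let $A$ be a finite alphabet, $E\subseteq W(A)$ and $\vec s\in V^\infty(A)$ such that $E$ is large in $\vec s$. Then there exists a sequence $\vec w=(w_n(x))_{n=0}^\infty\in V^\infty(A)$ with $\vec w\le\vec s$ such that, setting $F_n=\langle (w_i(x))_{i=0}^n\rangle_c$, the set $E\cap E_{F_n}$ is large in $(w_{n+1+i}(x))_{i=0}^\infty$ for every $n\in\mathbb N$.
   Context: $\mathbb N=\{0,1,2,\dots\}$. Let $A$ be a finite nonempty alphabet. $W(A)$ denotes the set of all finite words over $A$, including the empty word; words are concatenated by juxtaposition. Fix a symbol $x\notin A$. A variable word over $A$ is a finite word over $A\cup\{x\}$ in which $x$ occurs at least once; $V(A)$ is the set of variable words. For $s(x)\in V(A)$ and $a\in A\cup\{x\}$, $s(a)$ is obtained by replacing every occurrence of $x$ by $a$. $V^\infty(A)$ is the set of infinite sequences of variable words. For a sequence $(s_n(x))_{n\in I}$ of variable words indexed by a set $I\subseteq\mathbb N$ that is either a finite interval or of the form $\{m,m+1,\dots\}$: the constant span $\langle (s_n(x))_{n\in I}\rangle_c$ is the set of all words $s_{l_0}(a_0)s_{l_1}(a_1)\cdots s_{l_j}(a_j)$ with $j\ge 0$, $l_0<\dots<l_j$ in $I$ and $a_0,\dots,a_j\in A$; the variable span $\langle (s_n(x))_{n\in I}\rangle_v$ is the set of all words $s_{l_0}(a_0)\cdots s_{l_j}(a_j)$ with $j\ge0$, $l_0<\dots<l_j$ in $I$, $a_0,\dots,a_j\in A\cup\{x\}$ and at least one $a_i=x$. Extracted subsequences: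 let $\vec s=(s_n(x))_{n=0}^\infty\in V^\infty(A)$. A finite sequence $(t_n(x))_{n=0}^l$ of variable words is an extracted subsequence of $\vec s$ if there exist integers $0=m_0<m_1<\dots<m_{l+1}$ with $t_i(x)\in\langle (s_n(x))_{n=m_i}^{m_{i+1}-1}\rangle_v$ for all $0\le i\le l$. An infinite sequence $\vec t=(t_n(x))_{n=0}^\infty$ is an extracted subsequence of $\vec s$ if every initial segment $(t_n(x))_{n=0}^l$ is a finite extracted subsequence of $\vec s$. We write $\vec t\le\vec s$. A set $E\subseteq W(A)$ is large in $\vec s\in V^\infty(A)$ if $E\cap\langle\vec w\rangle_c\neq\emptyset$ for every infinite extracted subsequence $\vec w$ of $\vec s$. For $E\subseteq W(A)$ and nonempty $F\subseteq W(A)$, $E_F=\{z\in W(A): wz\in E\text{ for every }w\in F\}$. *)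

From mathcomp Require Import all_boot.
Set Implicit Arguments. Unset Strict Implicit. Unset Printing Implicit Defensive.

(* Alphabet A : finType.  The letter set A ∪ {x} is [option A], with
   [None] playing the role of the variable symbol x. *)

Definition word (A : Type) := seq A.
Definition xword (A : Type) := seq (option A).

Definition is_var_word (A : eqType) (s : xword A) : bool := None \in s.

Definition subst_x (A : Type) (s : xword A) (a : option A) : xword A :=
  map (fun c => if c is Some b then Some b else a) s.

Definition subst_c (A : Type) (s : xword A) (a : A) : word A :=
  map (fun c => if c is Some b then b else a) s.

Definition vseq (A : eqType) (s : nat -> xword A) : Prop :=
  forall n, is_var_word (s n).

(* Index sets: finite interval [m, m'] (Some m') or the ray {m, m+1, ...} (None). *)
Definition in_index (m : nat) (m' : option nat) (l : nat) : bool :=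
  (m <= l) && (if m' is Some k then l <= k else true).

(* Constant span of (s_n)_{n ∈ I}: words s_{l_0}(a_0)...s_{l_j}(a_j),
   j >= 0, l_0 < ... < l_j in I, a_i ∈ A.  The choice data is a nonempty
   list of pairs (l_i, a_i). *)
Definition in_cspan (A : eqType) (s : nat -> xword A) (m : nat) (m' : option nat)
  (w : word A) : Prop :=
  exists ls : seq (nat * A),
    [/\ ls != [::],
        sorted ltn (map fst ls),
        all (in_index m m') (map fst ls) &
        w = flatten (map (fun p => subst_c (s p.1) p.2) ls)].

Definition in_vspan (A : eqType) (s : nat -> xword A) (m : nat) (m' : option nat)
  (w : xword A) : Prop :=
  exists ls : seq (nat * option A),
    [/\ ls != [::],
        sorted ltn (map fst ls),
        all (in_index m m') (map fst ls),
        None \in map snd ls &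
        w = flatten (map (fun p => subst_x (s p.1) p.2) ls)].

Definition fin_extracted (A : eqType) (t s : nat -> xword A) (l : nat) : Prop :=
  exists mm : nat -> nat,
    [/\ mm 0 = 0,
        (forall i, i <= l -> mm i < mm i.+1) &
        (forall i, i <= l -> in_vspan s (mm i) (Some (mm i.+1).-1) (t i))].

Definition extracted (A : eqType) (t s : nat -> xword A) : Prop :=
  forall l, fin_extracted t s l.

Definition large (A : eqType) (E : word A -> Prop) (s : nat -> xword A) : Prop :=
  forall w : nat -> xword A, vseq w -> extracted w s ->
    exists z, E z /\ in_cspan w 0 None z.

Definition shiftset (A : Type) (E F : word A -> Prop) : word A -> Prop :=
  fun z => forall w, F w -> E (w ++ z).

From mathcomp Require Import all_boot.
From Stdlib Require Import Classical ClassicalEpsilon FunctionalExtensionality.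
Set Implicit Arguments. Unset Strict Implicit. Unset Printing Implicit Defensive.

(* The
   Hales–Jewett theorem (by the focusing argument) gives the avoidance lemma:
   if no pattern, preceded by a prefix and followed by an optional trailing
   word, has all its instances in G, then some r ≤ s has constant span
   disjoint from G.  This yields the line lemma (a large set contains all
   instances of some variable word) and Lemma C': if G is large in D, some
   u ≤ D makes {z ∈ G : u_0(a) z ∈ G for all a} large in the tail of u, proved
   by contradiction through a fusion of stages and the avoidance lemma.
   Iterating Lemma C' with the same fusion argument gives the theorem, the
   sets E ∩ E_{F_n} being defined by recursion on n. *)

Section ChoiceLists.
Variable A : finType.
Implicit Types (s : nat -> xword A).

Definition vword s (ls : seq (nat * option A)) : xword A :=
  flatten [seq subst_x (s p.1) p.2 | p <- ls].
Definition cword s (ls : seq (nat * A)) : word A :=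
  flatten [seq subst_c (s p.1) p.2 | p <- ls].

Definition subx (b a : option A) : option A := if b is Some c then Some c else a.
Definition subc (b : option A) (a : A) : A := if b is Some c then c else a.

Lemma subst_x_cat (w1 w2 : xword A) o :
  subst_x (w1 ++ w2) o = subst_x w1 o ++ subst_x w2 o.
Proof. by rewrite /subst_x map_cat. Qed.

Lemma subst_c_cat (w1 w2 : xword A) a :
  subst_c (w1 ++ w2) a = subst_c w1 a ++ subst_c w2 a.
Proof. by rewrite /subst_c map_cat. Qed.

Lemma subst_x_None (w : xword A) : subst_x w None = w.
Proof. by rewrite /subst_x -[RHS]map_id; apply: eq_map => -[]. Qed.

Lemma subst_x_vword s ls o :
  subst_x (vword s ls) o = vword s [seq (q.1, subx q.2 o) | q <- ls].
Proof.
elim: ls => [|q ls IH] //=; rewrite subst_x_cat IH; congr (_ ++ _).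
by rewrite /subst_x -map_comp; apply: eq_map => -[c|] //=; case: q.2.
Qed.

Lemma subst_c_vword s ls a :
  subst_c (vword s ls) a = cword s [seq (q.1, subc q.2 a) | q <- ls].
Proof.
elim: ls => [|q ls IH] //=; rewrite subst_c_cat IH; congr (_ ++ _).
by rewrite /subst_c /subst_x -map_comp; apply: eq_map => -[c|] //=; case: q.2.
Qed.

Lemma vword_cat s l1 l2 : vword s (l1 ++ l2) = vword s l1 ++ vword s l2.
Proof. by rewrite /vword map_cat flatten_cat. Qed.

Lemma cword_cat s l1 l2 : cword s (l1 ++ l2) = cword s l1 ++ cword s l2.
Proof. by rewrite /cword map_cat flatten_cat. Qed.

Lemma cword_rcons s ls p : cword s (rcons ls p) = cword s ls ++ subst_c (s p.1) p.2.
Proof. by rewrite -cats1 cword_cat /cword /= cats0. Qed.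

Lemma subst_c_vword_const s (ls : seq (nat * A)) a :
  subst_c (vword s [seq (q.1, Some q.2) | q <- ls]) a = cword s ls.
Proof. by rewrite subst_c_vword -map_comp; congr cword; apply: map_id_in => -[]. Qed.

Lemma vword_var s ls : vseq s -> None \in map snd ls -> is_var_word (vword s ls).
Proof.
move=> hs /mapP [q hq hq2]; apply/flattenP; exists (subst_x (s q.1) q.2).
  exact: map_f.
by rewrite -hq2 subst_x_None; apply: hs.
Qed.

(* Composition: if every u_j is vword s (R j), a word of the span of u is a
   word of the span of s, with choice list obtained by substitution. *)
Definition vcomp (ls : seq (nat * option A)) (R : nat -> seq (nat * option A)) :=
  flatten [seq [seq (q.1, subx q.2 p.2) | q <- R p.1] | p <- ls].
Definition ccomp (ls : seq (nat * A)) (R : nat -> seq (nat * option A)) :=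
  flatten [seq [seq (q.1, subc q.2 p.2) | q <- R p.1] | p <- ls].

Lemma vword_comp u s ls R : (forall p, p \in ls -> u p.1 = vword s (R p.1)) ->
  vword u ls = vword s (vcomp ls R).
Proof.
elim: ls => [|p ls IH] // H; rewrite /vcomp /= vword_cat -/(vcomp ls R).
rewrite -IH => [|q hq]; last exact/H/mem_behead.
by rewrite -subst_x_vword -H ?mem_head.
Qed.

Lemma cword_comp u s ls R : (forall p, p \in ls -> u p.1 = vword s (R p.1)) ->
  cword u ls = cword s (ccomp ls R).
Proof.
elim: ls => [|p ls IH] // H; rewrite /ccomp /= cword_cat -/(ccomp ls R).
rewrite -IH => [|q hq]; last exact/H/mem_behead.
by rewrite -subst_c_vword -H ?mem_head.
Qed.

Lemma vcomp_indices ls R :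
  map fst (vcomp ls R) = flatten [seq map fst (R j) | j <- map fst ls].
Proof.
elim: ls => [|p ls IH] //=; rewrite /vcomp /= map_cat -/(vcomp ls R) IH -map_comp.
by congr (_ ++ _); apply: eq_map.
Qed.

Lemma ccomp_indices ls R :
  map fst (ccomp ls R) = flatten [seq map fst (R j) | j <- map fst ls].
Proof.
elim: ls => [|p ls IH] //=; rewrite /ccomp /= map_cat -/(ccomp ls R) IH -map_comp.
by congr (_ ++ _); apply: eq_map.
Qed.

Lemma in_vspanE s m k w : in_vspan s m (Some k) w <->
  exists ls, [/\ ls != [::], pairwise ltn (map fst ls),
     all (fun i => m <= i <= k) (map fst ls), None \in map snd ls & w = vword s ls].
Proof.
have hsort : forall l, sorted ltn l = pairwise ltn l by apply: sorted_pairwise; apply: ltn_trans.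
by split=> -[ls [h1 h2 h3 h4 h5]]; exists ls; rewrite ?hsort // -hsort.
Qed.

Lemma in_cspanE s z : in_cspan s 0 None z <->
  exists ls, [/\ ls != [::], pairwise ltn (map fst ls) & z = cword s ls].
Proof.
have hsort : forall l, sorted ltn l = pairwise ltn l by apply: sorted_pairwise; apply: ltn_trans.
split=> [[ls [h1 h2 h3 h4]]|[ls [h1 h2 h3]]]; exists ls.
  by rewrite -hsort.
by rewrite hsort; split=> //; apply/allP.
Qed.

End ChoiceLists.

Lemma incr_le (mm : nat -> nat) a b : (forall j, a <= j < b -> mm j < mm j.+1) ->
  forall i j, a <= i -> i <= j -> j <= b -> mm i <= mm j.
Proof.
move=> H i j hai; elim: j => [|j IH]; first by rewrite leqn0 => /eqP ->.
rewrite leq_eqVlt => /orP [/eqP <- //| hij] hjb.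
apply: leq_trans (IH hij (ltnW hjb)) (ltnW (H j _)).
by rewrite hjb (leq_trans hai hij).
Qed.

Lemma incr_lt (mm : nat -> nat) a b : (forall j, a <= j < b -> mm j < mm j.+1) ->
  forall i j, a <= i -> i < j -> j <= b -> mm i < mm j.
Proof.
move=> H i j hai hij hjb; apply: leq_trans (H i _) (incr_le H _ hij hjb).
  by rewrite hai (leq_trans hij hjb).
exact: leq_trans hai (leqnSn i).
Qed.

Lemma flatten_blocks (I : seq nat) (J : nat -> seq nat) (mm : nat -> nat) a b :
  (forall j, a <= j < b -> mm j < mm j.+1) ->
  pairwise ltn I -> all (fun j => a <= j < b) I ->
  (forall j, j \in I -> pairwise ltn (J j) /\ all (fun i => mm j <= i < mm j.+1) (J j)) ->
  let F := flatten [seq J j | j <- I] in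
  pairwise ltn F /\ all (fun i => mm a <= i < mm b) F.
Proof.
move=> Hmm; elim: I => [|j I IH] //= /andP [hjI hI] /andP [/andP [haj hjb] hIr] HJ.
have [pJ rJ] := HJ j (mem_head _ _).
have [pF rF] := IH hI hIr (fun k hk => HJ k (@mem_behead _ (j :: I) k hk)).
rewrite pairwise_cat all_cat pJ pF rF !andbT; split.
  apply/allrelP => i i' hi /flattenP [_ /mapP [k hk ->] hi'].
  have /andP [hki' _] := allP (proj2 (HJ k (@mem_behead _ (j :: I) k hk))) i' hi'.
  have /andP [_ hkb] := allP hIr k hk.
  have /andP [_ hij] := allP rJ i hi.
  apply: leq_trans hij (leq_trans (incr_le Hmm _ (allP hjI k hk) (ltnW hkb)) hki').
  exact: leq_trans haj (leqnSn j).
apply/allP => i hi; have /andP [hji hij] := allP rJ i hi; apply/andP; split.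
  exact: leq_trans (incr_le Hmm (leqnn a) haj (ltnW hjb)) hji.
exact: leq_trans hij (incr_le Hmm (leq_trans haj (leqnSn j)) hjb (leqnn b)).
Qed.

Lemma flatten_blocks_nonempty (I : seq nat) (J : nat -> seq nat) :
  I != [::] -> (forall j, j \in I -> J j != [::]) -> flatten [seq J j | j <- I] != [::].
Proof. by case: I => [//|j I] _ HJ /=; case: (J j) (HJ j (mem_head _ _)). Qed.

Lemma restricted_choice (T : Type) (d : T) (Q : nat -> Prop) (P : nat -> T -> Prop) :
  (forall j, Q j -> exists x, P j x) -> exists f : nat -> T, forall j, Q j -> P j (f j).
Proof.
move=> H; apply: (choice (fun j x => Q j -> P j x)) => j.
have [/H [x hx]|hQ] := classic (Q j); first by exists x.
by exists d.
Qed.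

Section Extracted.
Variable A : finType.
Implicit Types (s t u : nat -> xword A).

Definition tail_from s n : nat -> xword A := fun i => s (n + i).

Lemma tail_from_add s n m : tail_from (tail_from s n) m = tail_from s (n + m).
Proof. by apply: functional_extensionality => i; rewrite /tail_from addnA. Qed.

Lemma vspan_block_reps u s (mm : nat -> nat) a b :
  (forall j, a <= j < b -> mm j < mm j.+1) ->
  (forall j, a <= j < b -> in_vspan s (mm j) (Some (mm j.+1).-1) (u j)) ->
  exists R : nat -> seq (nat * option A), forall j, a <= j < b ->
    [/\ R j != [::], pairwise ltn (map fst (R j)),
        all (fun i => mm j <= i < mm j.+1) (map fst (R j)), None \in map snd (R j) &
        u j = vword s (R j)].
Proof.
move=> Hmm Hu.
suff /(restricted_choice [::]) [R HR] : forall j, a <= j < b -> exists ls,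
    [/\ ls != [::], pairwise ltn (map fst ls),
        all (fun i => mm j <= i < mm j.+1) (map fst ls), None \in map snd ls &
        u j = vword s ls] by exists R.
move=> j hj; have [ls [l1 l2 l3 l4 l5]] := proj1 (in_vspanE _ _ _ _) (Hu j hj).
exists ls; split=> //; apply/allP => i hi; have /andP [-> hi'] := allP l3 i hi.
by move: (Hmm j hj) hi'; case: (mm j.+1) => // n _; rewrite ltnS.
Qed.

Lemma vspan_compose u s (mm : nat -> nat) a b w :
  (forall j, a <= j < b.+1 -> mm j < mm j.+1) ->
  (forall j, a <= j < b.+1 -> in_vspan s (mm j) (Some (mm j.+1).-1) (u j)) ->
  in_vspan u a (Some b) w -> in_vspan s (mm a) (Some (mm b.+1).-1) w.
Proof.
move=> Hmm Hu /in_vspanE [ls [l1 l2 l3 l4 ->]].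
have [R HR] := vspan_block_reps Hmm Hu.
have inI j : j \in map fst ls -> a <= j < b.+1 by move/(allP l3).
have [P1 P2] := @flatten_blocks (map fst ls) (fun j => map fst (R j)) mm a b.+1 Hmm l2 l3
  (fun j hj => let: And5 _ h2 h3 _ _ := HR j (inI j hj) in conj h2 h3).
apply/in_vspanE; exists (vcomp ls R); split.
- rewrite -size_eq0 -(size_map fst) size_eq0 vcomp_indices.
  apply: flatten_blocks_nonempty => [|j hj]; first by case: (ls) l1.
  by have [+ _ _ _ _] := HR j (inI j hj); case: (R j).
- by rewrite vcomp_indices.
- rewrite vcomp_indices; apply: sub_all P2 => i /andP [-> /=].
  by case: (mm b.+1) => // n; rewrite ltnS.
- have [p hp hp2] := mapP l4.
  have [_ _ _ /mapP [q hq hq2] _] := HR _ (inI _ (map_f fst hp)).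
  apply/mapP; exists (q.1, subx q.2 p.2); last by rewrite /= -hq2 -hp2.
  apply/flattenP; exists [seq (q0.1, subx q0.2 p.2) | q0 <- R p.1].
    by apply/mapP; exists p.
  by apply/mapP; exists q.
- by apply: vword_comp => p hp; have [] := HR _ (inI _ (map_f fst hp)).
Qed.

Lemma cspan_extracted t s z : extracted t s -> in_cspan t 0 None z -> in_cspan s 0 None z.
Proof.
move=> Hts /in_cspanE [ls [l1 l2 ->]].
pose l := \max_(i <- map fst ls) i.
have hl : all (fun j => 0 <= j < l.+1) (map fst ls).
  by apply/allP => j hj; rewrite leq0n ltnS; apply: leq_bigmax_seq.
have [mm [_ h1 h2]] := Hts l.
have Hmm j : 0 <= j < l.+1 -> mm j < mm j.+1 by case/andP => _; apply: h1.
have Ht j : 0 <= j < l.+1 -> in_vspan s (mm j) (Some (mm j.+1).-1) (t j).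
  by case/andP => _; apply: h2.
have [R HR] := vspan_block_reps Hmm Ht.
have inI j : j \in map fst ls -> 0 <= j < l.+1 by move/(allP hl).
have [P1 _] := @flatten_blocks (map fst ls) (fun j => map fst (R j)) mm 0 l.+1 Hmm l2 hl
  (fun j hj => let: And5 _ h2 h3 _ _ := HR j (inI j hj) in conj h2 h3).
apply/in_cspanE; exists (ccomp ls R); split.
- rewrite -size_eq0 -(size_map fst) size_eq0 ccomp_indices.
  apply: flatten_blocks_nonempty => [|j hj]; first by case: (ls) l1.
  by have [+ _ _ _ _] := HR j (inI j hj); case: (R j).
- by rewrite ccomp_indices.
- by apply: cword_comp => p hp; have [] := HR _ (inI _ (map_f fst hp)).
Qed.

(* Extraction is transitive: the blocks of the blocks are unions of blocks. *)
Lemma extracted_trans t u s : extracted t u -> extracted u s -> extracted t s.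
Proof.
move=> Htu Hus l.
have [mm1 [h0 h1 h2]] := Htu l.
have [mm2 [g0 g1 g2]] := Hus (mm1 l.+1).
have h1' j : 0 <= j < l.+1 -> mm1 j < mm1 j.+1 by case/andP => _; apply: h1.
have g1' j : 0 <= j < (mm1 l.+1).+1 -> mm2 j < mm2 j.+1 by case/andP => _; apply: g1.
have le1 i : i <= l -> mm1 i.+1 <= mm1 l.+1 by move=> hi; apply: (incr_le h1').
exists (mm2 \o mm1); split=> /=.
- by rewrite h0 g0.
- move=> i hi; apply: (incr_lt g1') => //; [exact: h1 | exact: leqW (le1 i hi)].
- move=> i hi; have hpos : 0 < mm1 i.+1 := leq_ltn_trans (leq0n _) (h1 i hi).
  have := @vspan_compose u s mm2 (mm1 i) (mm1 i.+1).-1 (t i).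
  rewrite prednK //; apply; last exact: h2.
  + by move=> j /andP [_ hj]; apply/g1/ltnW/(leq_trans hj (le1 i hi)).
  + by move=> j /andP [_ hj]; apply/g2/ltnW/(leq_trans hj (le1 i hi)).
Qed.

Lemma vspan_single s i : in_vspan s i (Some i) (s i).
Proof.
apply/in_vspanE; exists [:: (i, None)].
by split=> //=; rewrite ?leqnn // /vword /= subst_x_None cats0.
Qed.

Lemma extracted_refl s : extracted s s.
Proof. by move=> l; exists id; split=> // i _; apply: vspan_single. Qed.

Lemma large_extracted (G : word A -> Prop) t s : large G s -> extracted t s -> large G t.
Proof. by move=> HG Hts w hw Hwt; apply: HG => //; apply: extracted_trans Hwt Hts. Qed.

Lemma large_mono (G G' : word A -> Prop) s :
  (forall z, G z -> G' z) -> large G s -> large G' s.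
Proof. by move=> HGG HG w hw /(HG w hw) [z [/HGG hz1 hz2]]; exists z. Qed.

Lemma vspan_shift s K m k w : in_vspan (tail_from s K) m (Some k) w ->
  in_vspan s (K + m) (Some (K + k)) w.
Proof.
move/in_vspanE => [ls [l1 l2 l3 l4 l5]]; apply/in_vspanE.
exists [seq (K + p.1, p.2) | p <- ls]; split.
- by case: ls {l2 l3 l4 l5} l1.
- rewrite -map_comp (map_comp (addn K) fst) pairwise_map.
  by apply: sub_pairwise l2 => x y /=; rewrite ltn_add2l.
- rewrite -map_comp (map_comp (addn K) fst) all_map; apply: sub_all l3 => x /=.
  by rewrite !leq_add2l.
- by rewrite -map_comp.
- by rewrite l5 /vword -map_comp.
Qed.

Lemma extracted_glue t s j K (mm : nat -> nat) :
  mm 0 = 0 -> (forall i, i < j -> mm i < mm i.+1) -> mm j = K ->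
  (forall i, i < j -> in_vspan s (mm i) (Some (mm i.+1).-1) (t i)) ->
  extracted (tail_from t j) (tail_from s K) -> extracted t s.
Proof.
move=> h0 h1 hK h2 Hext l.
have [hlj|hjl] := ltnP l j.
  by exists mm; split=> // i hi; [apply: h1|apply: h2]; apply: leq_ltn_trans hi hlj.
have [mm' [g0 g1 g2]] := Hext (l - j).
exists (fun i => if i <= j then mm i else K + mm' (i - j)); split=> [//|i hi|i hi].
- have [hij|hji] := ltnP i j; first by rewrite (ltnW hij); apply: h1.
  rewrite subSn //; have [hij2|hji2] := leqP i j; last first.
    by rewrite ltn_add2l; apply/g1/leq_sub2r.
  have -> : i = j by apply/eqP; rewrite eqn_leq hij2 hji.
  by rewrite hK subnn -[X in X < _]addn0 -{1}g0 ltn_add2l; apply: g1.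
- have [hij|hji] := ltnP i j; first by rewrite (ltnW hij); apply: h2.
  have hle : i - j <= l - j := leq_sub2r _ hi.
  have hpos : 0 < mm' (i - j).+1 := leq_ltn_trans (leq0n _) (g1 _ hle).
  have := vspan_shift (g2 (i - j) hle); rewrite /tail_from subnKC // subSn //.
  rewrite -!subn1 addnBA //; have [hij2|//] := leqP i j.
  have eij : i = j by apply/eqP; rewrite eqn_leq hij2 hji.
  by rewrite eij hK subnn g0 addn0.
Qed.

Lemma extracted_tail s K : extracted (tail_from s K) s.
Proof.
apply: (@extracted_glue _ s 1 K.+1 (fun i => if i is 0 then 0 else K.+1)) => //.
- by case.
- move=> i; rewrite ltnS leqn0 => /eqP -> /=; apply/in_vspanE; exists [:: (K, None)].
  by split=> //=; rewrite ?leqnn // /tail_from addn0 /vword /= subst_x_None cats0.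
- by rewrite tail_from_add addn1; apply: extracted_refl.
Qed.

Lemma vspan_agree s s' n v : (forall i, i <= n -> s i = s' i) ->
  in_vspan s 0 (Some n) v -> in_vspan s' 0 (Some n) v.
Proof.
move=> H /in_vspanE [ls [l1 l2 l3 l4 ->]]; apply/in_vspanE; exists ls; split=> //.
elim: ls l3 {l1 l2 l4} => [|q ls IH] //= /andP [hq hls].
by rewrite /vword /= H // -/(vword s ls) IH.
Qed.

Lemma vspan_var s m k w : vseq s -> in_vspan s m (Some k) w -> is_var_word w.
Proof. by move=> hs /in_vspanE [ls [_ _ _ l4 ->]]; apply: vword_var. Qed.

Lemma fin_extracted_agree t t' s l : (forall i, i <= l -> t i = t' i) ->
  fin_extracted t s l -> fin_extracted t' s l.
Proof. by move=> H [mm [h0 h1 h2]]; exists mm; split=> // i hi; rewrite -H //; apply: h2. Qed.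

End Extracted.

(* The Hales–Jewett theorem, first for the alphabet {0, ..., t-1} coded by
   natural numbers, by induction on t with the classical focusing argument. *)

Definition subst_nat (p : seq (option nat)) (a : nat) : seq nat :=
  map (fun o => if o is Some b then b else a) p.

Definition line_below (k : nat) (p : seq (option nat)) :=
  all (fun o => if o is Some b then b < k else true) p.
Definition word_below (k : nat) (x : seq nat) := all (fun b => b < k) x.

Lemma subst_nat_cat p q a : subst_nat (p ++ q) a = subst_nat p a ++ subst_nat q a.
Proof. by rewrite /subst_nat map_cat. Qed.

Lemma subst_nat_const x a : subst_nat (map Some x) a = x.
Proof. by rewrite /subst_nat -map_comp map_id. Qed.

Lemma line_below_cat k p q : line_below k (p ++ q) = line_below k p && line_below k q.
Proof. exact: all_cat. Qed.

Lemma line_below_const k x : line_below k (map Some x) = word_below k x.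
Proof. exact: all_map. Qed.

Lemma word_below_cat k x y : word_below k (x ++ y) = word_below k x && word_below k y.
Proof. exact: all_cat. Qed.

Lemma word_below_subst k p a : line_below k p -> a < k -> word_below k (subst_nat p a).
Proof. by move=> /allP hp ha; apply/allP => b /mapP [[c|] /hp //= ? ->]. Qed.

Lemma line_below_mono k k' p : k <= k' -> line_below k p -> line_below k' p.
Proof. by move=> hk /allP hp; apply/allP => -[b|] // /hp h; apply: leq_trans h hk. Qed.

Definition mono_line (C : Type) (t : nat) (c : seq nat -> C) (N : nat) p :=
  [/\ size p = N, None \in p, line_below t p &
      forall a b, a < t -> b < t -> c (subst_nat p a) = c (subst_nat p b)].

Definition hales_jewett_nat (t : nat) : Prop :=
  forall C : finType, exists N, forall c : seq nat -> C, exists p, mono_line t c N p.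

Lemma mono_line_append (C : Type) t (c : seq nat -> C) n p w :
  word_below t w -> mono_line t (fun x => c (x ++ w)) n p ->
  mono_line t c (n + size w) (p ++ map Some w).
Proof.
move=> hw [p1 p2 p3 p4]; split.
- by rewrite size_cat size_map p1.
- by rewrite mem_cat p2.
- by rewrite line_below_cat line_below_const p3.
- by move=> a b ha hb; rewrite !subst_nat_cat !subst_nat_const; apply: p4.
Qed.

Lemma uniq_full (C : finType) (s : seq C) : uniq s -> size s = #|C| -> forall x, x \in s.
Proof.
move=> us hs x; apply/negPn/negP => hx.
have sub : {subset s <= predC1 x}.
  by move=> y hy; rewrite !inE; apply: contraNneq hx => <-.
have := subset_leq_card (introT subsetP sub).
rewrite cardC1 (card_uniqP us) hs.
have hC : 0 < #|C| by apply/card_gt0P; exists x.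
by case: #|C| hs hC => [|n] //= _ _; rewrite ltnn.
Qed.

Section Focusing.
Variable t : nat.
Hypothesis IH : hales_jewett_nat t.
Variable C : finType.

Definition focused (N : nat) (c : seq nat -> C) (f : seq nat)
    (pcs : seq (seq (option nat) * C)) :=
  [/\ size f = N, word_below t.+1 f, uniq (map snd pcs) &
      forall pc, pc \in pcs ->
        [/\ size pc.1 = N, None \in pc.1, line_below t.+1 pc.1, subst_nat pc.1 t = f &
            forall a, a < t -> c (subst_nat pc.1 a) = pc.2]].

Definition focusing (k : nat) : Prop := exists N, forall c : seq nat -> C,
  (exists p, mono_line t.+1 c N p) \/
  (exists f pcs, focused N c f pcs /\ size pcs = k).

Lemma tuple_of_word (n : nat) (x : seq nat) : size x = n -> word_below t.+1 x ->
  exists xt : n.-tuple 'I_t.+1, map val xt = x.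
Proof.
move=> hs hx; have sz : size (map (@inord t) x) == n by rewrite size_map hs.
exists (Tuple sz) => /=; rewrite -map_comp -[RHS]map_id; apply/eq_in_map => b hb /=.
by rewrite inordK //; apply: (allP hx).
Qed.

Lemma focused_mono N c f pcs pc : focused N c f pcs -> pc \in pcs -> c f = pc.2 ->
  mono_line t.+1 c N pc.1.
Proof.
move=> [_ _ _ H] hpc hf; have [q1 q2 q3 q4 q5] := H pc hpc.
have key a : a < t.+1 -> c (subst_nat pc.1 a) = pc.2.
  by rewrite ltnS leq_eqVlt => /orP [/eqP ->|/q5 //]; rewrite q4.
by split=> // a b ha hb; rewrite !key.
Qed.

Lemma focused_extend N c f pcs (L : seq (option nat)) :
  None \in L -> line_below t L ->
  (forall x a, size x = N -> word_below t.+1 x -> a < t ->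
     c (x ++ subst_nat L a) = c (x ++ subst_nat L 0)) ->
  focused N (fun x => c (x ++ subst_nat L 0)) f pcs ->
  c (f ++ subst_nat L 0) \notin map snd pcs ->
  focused (N + size L) c (f ++ subst_nat L t)
    ((map Some f ++ L, c (f ++ subst_nat L 0)) :: [seq (pc.1 ++ L, pc.2) | pc <- pcs]).
Proof.
move=> L2 L3 K1 [f1 f2 f3 f4] hcol; split.
- by rewrite size_cat f1 size_map.
- by rewrite word_below_cat f2; apply: word_below_subst => //; apply: line_below_mono L3.
- by rewrite /= -map_comp /= hcol.
move=> pc; rewrite inE => /orP [/eqP -> /=|/mapP [pc0 hpc0 ->] /=].
  split.
  - by rewrite size_cat size_map f1.
  - by rewrite mem_cat L2 orbT.
  - by rewrite line_below_cat line_below_const f2; apply: line_below_mono L3.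
  - by rewrite subst_nat_cat subst_nat_const.
  - by move=> a ha; rewrite subst_nat_cat subst_nat_const K1.
have [q1 q2 q3 q4 q5] := f4 pc0 hpc0; split.
- by rewrite size_cat q1.
- by rewrite mem_cat q2.
- by rewrite line_below_cat q3; apply: line_below_mono L3.
- by rewrite subst_nat_cat q4.
- move=> a ha; rewrite subst_nat_cat K1 ?size_map //; first exact: q5.
  by apply: word_below_subst => //; apply: ltnW.
Qed.

(* The line L is given by the induction hypothesis for the colouring of the
   words of the second block by the colourings they induce on the first one. *)
Lemma focusing_succ k : focusing k -> focusing k.+1.
Proof.
move=> [n Hn]; have [m Hm] := IH {ffun n.-tuple 'I_t.+1 -> C}.
exists (n + m) => c.
have [L [L1 L2 L3 L4]] := Hm (fun y => [ffun x : n.-tuple 'I_t.+1 => c (map val x ++ y)]).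
have K1 x a : size x = n -> word_below t.+1 x -> a < t ->
    c (x ++ subst_nat L a) = c (x ++ subst_nat L 0).
  move=> hs hx ha; have [xt <-] := tuple_of_word hs hx.
  have := congr1 (fun F : {ffun _ -> C} => F xt) (L4 a 0 ha (leq_ltn_trans (leq0n _) ha)).
  by rewrite !ffunE.
have okL0 : word_below t.+1 (subst_nat L 0).
  exact: word_below_subst (line_below_mono (leqnSn t) L3) _.
pose c'' x := c (x ++ subst_nat L 0).
have sizeL0 : size (subst_nat L 0) = m by rewrite size_map.
case: (Hn c'') => [[p hp]|[f [pcs [hf hsize]]]].
  by left; exists (p ++ map Some (subst_nat L 0)); rewrite -sizeL0; apply: mono_line_append.
case: (boolP (c'' f \in map snd pcs)) => [/mapP [pc hpc hpc2]|hcol].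
  left; exists (pc.1 ++ map Some (subst_nat L 0)); rewrite -sizeL0.
  by apply: mono_line_append => //; apply: (@focused_mono n c'' f pcs).
right; exists (f ++ subst_nat L t).
exists ((map Some f ++ L, c'' f) :: [seq (pc.1 ++ L, pc.2) | pc <- pcs]); split.
  by rewrite -L1; apply: focused_extend.
by rewrite /= size_map hsize.
Qed.

Lemma focusing_all k : focusing k.
Proof.
elim: k => [|k]; last exact: focusing_succ.
by exists 0 => c; right; exists [::], [::].
Qed.

(* With #|C| focused lines of distinct colours, the colour of the focus is
   one of them, which yields a monochromatic line. *)
Lemma mono_line_succ : exists N, forall c : seq nat -> C, exists p, mono_line t.+1 c N p.
Proof.
have [N HN] := focusing_all #|C|; exists N => c.
case: (HN c) => [//|[f [pcs [hf hsize]]]].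
have [_ _ huniq _] := hf.
have /mapP [pc hpc hpc2] : c f \in map snd pcs by apply: uniq_full; rewrite ?size_map.
by exists pc.1; apply: focused_mono hf hpc hpc2.
Qed.

End Focusing.

Lemma hales_jewett_nat_all t : hales_jewett_nat t.
Proof.
elim: t => [|t IHt] C; last exact: mono_line_succ.
by exists 1 => c; exists [:: None].
Qed.

Theorem hales_jewett (A : finType) (a0 : A) (C : finType) : exists N, forall c : word A -> C,
  exists p : xword A, [/\ size p = N, None \in p & forall a b, c (subst_c p a) = c (subst_c p b)].
Proof.
have [N HN] := hales_jewett_nat_all #|A| C; exists N => c.
pose g i := nth a0 (enum A) i.
have [p' [p1 p2 _ p4]] := HN (fun w => c (map g w)).
exists (map (omap g) p'); split.
- by rewrite size_map.
- by apply/mapP; exists None.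
have E a : subst_c (map (omap g) p') a = map g (subst_nat p' (index a (enum A))).
  rewrite /subst_c /subst_nat -!map_comp; apply: eq_map => -[b|] //=.
  by rewrite /g nth_index // mem_enum.
have hi a : index a (enum A) < #|A| by rewrite cardE index_mem mem_enum.
by move=> a b; rewrite !E; apply: p4.
Qed.

(* Prefixes: the words of a span of r_0, ..., r_{b-1} (including the empty
   word), for a substitution ev that is either subst_c or subst_x.  They form a
   finite set, enumerated by [prefixes]. *)
Section Prefixes.
Variables (A : finType) (L B : eqType) (ev : xword A -> L -> seq B).
Implicit Types (r : nat -> xword A).

Definition prefix_below r b (y : seq B) := exists ls : seq (nat * L),
  [/\ pairwise ltn (map fst ls), all (fun i => i < b) (map fst ls) &
      y = flatten [seq ev (r p.1) p.2 | p <- ls]].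

Lemma prefix_below_split r b y : prefix_below r b.+1 y ->
  prefix_below r b y \/ exists y' l, prefix_below r b y' /\ y = y' ++ ev (r b) l.
Proof.
move=> [ls [h1 h2 ->]]; case/lastP: ls h1 h2 => [|ls q] h1 h2; first by left; exists [::].
rewrite map_rcons pairwise_rcons in h1; case/andP: h1 => hq h1.
rewrite map_rcons all_rcons in h2; case/andP: h2 => hqb h2.
rewrite -cats1 map_cat flatten_cat /= cats0.
have [hqb2|hqb2] := ltnP q.1 b.
  left; exists (rcons ls q); split.
  - by rewrite map_rcons pairwise_rcons hq h1.
  - by rewrite map_rcons all_rcons hqb2 /=; apply: sub_all hq => i hi; apply: ltn_trans hi hqb2.
  - by rewrite -cats1 map_cat flatten_cat /= cats0.
have eq : q.1 = b by apply/eqP; rewrite eqn_leq -ltnS hqb.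
by right; exists (flatten [seq ev (r p.1) p.2 | p <- ls]), q.2; rewrite -eq; split=> //; exists ls.
Qed.

Variable letters : seq L.
Hypothesis letters_full : forall l, l \in letters.

Fixpoint prefixes r b : seq (seq B) :=
  if b is b'.+1 then prefixes r b' ++ [seq y ++ ev (r b') l | y <- prefixes r b', l <- letters]
  else [:: [::]].

Lemma prefixes_complete r b y : prefix_below r b y -> y \in prefixes r b.
Proof.
elim: b y => [|b IH] y; first by move=> [[|q ls] [h1 h2 ->]] //; rewrite mem_head.
move/prefix_below_split => [/IH h|[y' [l [/IH h ->]]]] /=; rewrite mem_cat ?h //.
by rewrite (allpairs_f (fun y l => y ++ ev (r b) l) h (letters_full l)) orbT.
Qed.

End Prefixes.

Notation cprefix := (prefix_below (@subst_c _)).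

Definition truth (P : Prop) : bool := if excluded_middle_informative P then true else false.

Lemma truthP (P : Prop) : truth P <-> P.
Proof. by rewrite /truth; case: excluded_middle_informative. Qed.

Section Blocks.
Variable A : finType.
Implicit Types (r : nat -> xword A).

Definition block_word r b (q : word A) : word A := cword r (zip (iota b (size q)) q).

Definition block_choice b (p : xword A) : seq (nat * option A) := zip (iota b (size p)) p.

Definition trail r (tr : bool) e (a : A) : word A := if tr then subst_c (r e) a else [::].

Definition pattern_choice b (p : xword A) (tr : bool) : seq (nat * option A) :=
  block_choice b p ++ (if tr then [:: (b + size p, None)] else [::]).

Lemma block_choice_indices b p : map fst (block_choice b p) = iota b (size p).
Proof. by rewrite /block_choice -/(unzip1 _) unzip1_zip // size_iota. Qed.

Lemma block_choice_letters b p : map snd (block_choice b p) = p.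
Proof. by rewrite /block_choice -/(unzip2 _) unzip2_zip // size_iota. Qed.

Lemma map_zip_snd (T1 T2 T3 : Type) (f : T2 -> T3) (I : seq T1) (p : seq T2) :
  [seq (q.1, f q.2) | q <- zip I p] = zip I (map f p).
Proof. by elim: I p => [|i I IH] [|x p] //=; rewrite IH. Qed.

Lemma subst_c_block r b p a :
  subst_c (vword r (block_choice b p)) a = block_word r b (subst_c p a).
Proof.
rewrite subst_c_vword /block_word /block_choice size_map.
by rewrite (map_zip_snd (fun o => subc o a)).
Qed.

Lemma subst_c_pattern r b p tr a : subst_c (vword r (pattern_choice b p tr)) a =
  block_word r b (subst_c p a) ++ trail r tr (b + size p) a.
Proof.
rewrite vword_cat subst_c_cat subst_c_block; congr (_ ++ _).
by case: tr => //=; rewrite /vword /= cats0 subst_x_None.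
Qed.

Lemma pattern_choice_block b p tr : None \in p ->
  let ls := pattern_choice b p tr in
  [/\ ls != [::], pairwise ltn (map fst ls),
      all (fun i => b <= i < b + size p + tr) (map fst ls) & None \in map snd ls].
Proof.
move=> hp /=; have hsz : 0 < size p by case: p hp.
have -> : map fst (pattern_choice b p tr) =
    iota b (size p) ++ (if tr then [:: b + size p] else [::]).
  by rewrite map_cat block_choice_indices; case: tr.
split.
- by rewrite -size_eq0 size_cat /block_choice size_zip size_iota minnn -lt0n ltn_addr.
- rewrite pairwise_cat -sorted_pairwise ?iota_ltn_sorted; last exact: ltn_trans.
  apply/and3P; split=> //; last by case: (tr).
  apply/allrelP => i j; rewrite mem_iota => /andP [_ hi].
  by case: (tr); rewrite ?in_nil // mem_seq1 => /eqP ->.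
- rewrite all_cat; apply/andP; split.
    by apply/allP => i; rewrite mem_iota => /andP [-> /ltn_addr ->].
  by case: (tr) => //=; rewrite leq_addr /= andbT addn1.
- by rewrite map_cat mem_cat block_choice_letters hp.
Qed.

Lemma block_extracted r (bs : nat -> nat) (R : nat -> seq (nat * option A)) :
  bs 0 = 0 -> (forall k, bs k < bs k.+1) ->
  (forall k, [/\ R k != [::], pairwise ltn (map fst (R k)),
    all (fun i => bs k <= i < bs k.+1) (map fst (R k)) & None \in map snd (R k)]) ->
  extracted (fun k => vword r (R k)) r.
Proof.
move=> h0 hbs HR l; exists bs; split=> // k _; have [h1 h2 h3 h4] := HR k.
apply/in_vspanE; exists (R k); split=> //; apply: sub_all h3 => i /andP [-> /=].
by case: (bs k.+1) => // n; rewrite ltnS.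
Qed.

Lemma block_cspan_last r (bs : nat -> nat) (R : nat -> seq (nat * option A)) z :
  (forall k, bs k < bs k.+1) ->
  (forall k, pairwise ltn (map fst (R k)) /\ all (fun i => bs k <= i < bs k.+1) (map fst (R k))) ->
  in_cspan (fun k => vword r (R k)) 0 None z ->
  exists k y a, cprefix r (bs k) y /\ z = y ++ subst_c (vword r (R k)) a.
Proof.
move=> hbs HR /in_cspanE [ls [l1 l2 ->]].
case/lastP: ls l1 l2 => [//|ls0 [k a]] _; rewrite map_rcons pairwise_rcons => /andP [hk l2].
exists k, (cword (fun k => vword r (R k)) ls0), a; split; last by rewrite cword_rcons.
have [P1 P2] := @flatten_blocks (map fst ls0) (fun j => map fst (R j)) bs 0 k
  (fun j _ => hbs j) l2 hk (fun j _ => HR j).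
exists (ccomp ls0 R); rewrite ccomp_indices; split=> //.
- by apply: sub_all P2 => i /andP [].
- by apply: cword_comp.
Qed.

Lemma prefix_block_vspan r b y (p : xword A) : cprefix r b y -> None \in p ->
  exists v, in_vspan r 0 (Some (b + size p).-1) v /\
    forall a, subst_c v a = y ++ block_word r b (subst_c p a).
Proof.
move=> [ls [h1 h2 ->]] hp; have hsz : 0 < size p by case: p hp.
have hle i : i < b + size p -> i <= (b + size p).-1 by case: (b + size p).
exists (vword r ([seq (q.1, Some q.2) | q <- ls] ++ block_choice b p)); split; last first.
  by move=> a; rewrite vword_cat subst_c_cat subst_c_vword_const subst_c_block.
apply/in_vspanE; eexists; split; last reflexivity.
- rewrite -size_eq0 size_cat /block_choice size_zip size_iota minnn -lt0n.
  exact: leq_trans hsz (leq_addl _ _).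
- rewrite map_cat block_choice_indices -map_comp pairwise_cat; apply/and3P; split.
  + apply/allrelP => i j /mapP [q hq ->] /=; rewrite mem_iota => /andP [hbj _].
    by apply: leq_trans hbj; apply: (allP h2 q.1 (map_f _ hq)).
  + by rewrite (eq_map (g := fst)).
  + by rewrite -sorted_pairwise ?iota_ltn_sorted //; apply: ltn_trans.
- rewrite map_cat block_choice_indices all_cat; apply/andP; split.
  + rewrite -map_comp all_map; apply/allP => q hq /=; apply: hle.
    by apply: leq_trans (allP h2 q.1 (map_f _ hq)) (leq_addr _ _).
  + by apply/allP => i; rewrite mem_iota => /andP [_ /hle].
- by rewrite map_cat mem_cat block_choice_letters hp orbT.
Qed.

End Blocks.

(* If no pattern p from any position b, preceded by any
   prefix y and followed by the optional trailing word, has all its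
   substitution instances in G, then some r' ≤ r has its constant span
   disjoint from G: r'_k is the pattern P(b_k) of [mono_patterns] placed at
   b_k (with its trailing variable word), the b_k following each other. *)
Section Avoidance.
Variables (A : finType) (a0 : A).
Implicit Types (r : nat -> xword A).

(* For every position b there is a pattern P(b) such that, for every prefix y
   below b and trailing letter e, whether y P(b)(a) r_{b+|P(b)|}(e) (trailing
   word only when tr holds) is in G does not depend on a: apply Hales–Jewett
   to the colouring of patterns by the truth values for all (y, e). *)
Lemma mono_patterns r (G : word A -> Prop) (tr : bool) : exists P : nat -> xword A,
  forall b, None \in P b /\ forall y e a a', cprefix r b y ->
    let ext a := y ++ block_word r b (subst_c (P b) a) ++ trail r tr (b + size (P b)) e in
    G (ext a) -> G (ext a').
Proof.
pose Y b := [seq (y, e) | y <- prefixes (@subst_c A) (enum A) r b, e <- enum A].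
pose col b (q : word A) : (size (Y b)).-tuple bool := map_tuple (fun ye =>
  truth (G (ye.1 ++ block_word r b q ++ trail r tr (b + size q) ye.2))) (in_tuple (Y b)).
suff /choice [P HP] : forall b, exists p : xword A,
    None \in p /\ forall a a', col b (subst_c p a) = col b (subst_c p a').
  exists P => b; have [hP Hcol] := HP b; split=> // y e a a' hy /= HG.
  have hye : (y, e) \in Y b.
    apply: (allpairs_f (fun y e => (y, e))); last exact: mem_enum.
    by apply: prefixes_complete hy => l; apply: mem_enum.
  have /eq_in_map/(_ _ hye) /= := congr1 val (Hcol a a').
  by rewrite !size_map => E; apply/truthP; rewrite -E; apply/truthP.
move=> b; have [N HN] := hales_jewett a0 ((size (Y b)).-tuple bool).
by have [p [_ ? ?]] := HN (col b); exists p.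
Qed.

Theorem avoidance r (G : word A -> Prop) (tr : bool) : vseq r ->
  (forall b (p : xword A) y a', None \in p -> cprefix r b y ->
     ~ (forall a, G (y ++ block_word r b (subst_c p a) ++ trail r tr (b + size p) a'))) ->
  exists r', [/\ vseq r', extracted r' r & forall z, in_cspan r' 0 None z -> ~ G z].
Proof.
move=> hr H; have [P HP] := mono_patterns r G tr.
pose bs k := iter k (fun b => b + size (P b) + tr) 0.
pose R k := pattern_choice (bs k) (P (bs k)) tr.
have R_block k := pattern_choice_block (bs k) tr (proj1 (HP (bs k))).
have bs_incr k : bs k < bs k.+1.
  rewrite /= -addnA -{1}(addn0 (bs k)) ltn_add2l ltn_addr //.
  by case: (HP (bs k)); case: (P (bs k)).
exists (fun k => vword r (R k)); split.
- by move=> k; have [_ _ _ hN] := R_block k; apply: vword_var.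
- exact: (@block_extracted _ r bs R).
have R_indices k :
    pairwise ltn (map fst (R k)) /\ all (fun i => bs k <= i < bs k.+1) (map fst (R k)).
  by have [] := R_block k.
move=> z /(block_cspan_last bs_incr R_indices) [k [y [a [hy ->]]]].
rewrite subst_c_pattern => HG.
apply: (H _ _ y a (proj1 (HP (bs k))) hy) => a'.
exact: (proj2 (HP (bs k)) y a a a' hy HG).
Qed.

End Avoidance.

Section Splicing.
Variable A : finType.
Implicit Types (s c u E : nat -> xword A).

Definition scons (v : xword A) E : nat -> xword A := fun i => if i is i'.+1 then E i' else v.

Definition prepend c n u : nat -> xword A := fun i => if i < n then c i else u (i - n).

Lemma prepend_lt c n u i : i < n -> prepend c n u i = c i.
Proof. by rewrite /prepend => ->. Qed.

Lemma prepend_tail c n u : tail_from (prepend c n u) n = u.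
Proof.
apply: functional_extensionality => i.
by rewrite /tail_from /prepend ltnNge leq_addr addKn.
Qed.

Lemma vseq_prepend c n u : vseq c -> vseq u -> vseq (prepend c n u).
Proof. by move=> hc hu i; rewrite /prepend; case: ifP. Qed.

Lemma vseq_scons v E : is_var_word v -> vseq E -> vseq (scons v E).
Proof. by move=> hv hE []. Qed.

Lemma scons_extracted s M v E :
  in_vspan s 0 (Some M) v -> extracted E (tail_from s M.+1) -> extracted (scons v E) s.
Proof.
move=> hv hE.
by apply: (@extracted_glue _ _ s 1 M.+1 (fun i => if i is 0 then 0 else M.+1)) => // -[].
Qed.

Lemma prepend_extracted c n u k : extracted u (tail_from c n) -> k <= n ->
  extracted (tail_from (prepend c n u) k) (tail_from c k).
Proof.
move=> hu hk; apply: (@extracted_glue _ _ _ (n - k) (n - k) id) => //.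
  move=> i hi; rewrite /tail_from prepend_lt; first exact: (vspan_single (tail_from c k) i).
  by rewrite -ltn_subRL.
by rewrite !tail_from_add subnKC // prepend_tail.
Qed.

End Splicing.

Section Fusion.
Variable A : finType.
Implicit Types (c : nat -> xword A).

Definition refines n (c' c : nat -> xword A) :=
  (forall i, i < n -> c' i = c i) /\
  (forall k, k <= n -> extracted (tail_from c' k) (tail_from c k)).

Lemma refines_extracted n c' c D : refines n c' c -> extracted c D -> extracted c' D.
Proof. by move=> [_ /(_ 0 (leq0n n)) h]; apply: extracted_trans h. Qed.

Lemma fusion D (Inv Q : nat -> (nat -> xword A) -> Prop) :
  Inv 0 D -> (forall n c, Inv n c -> exists c', [/\ Inv n.+1 c', refines n c' c & Q n c']) ->
  exists cs : nat -> nat -> xword A,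
    [/\ cs 0 = D, forall n, Inv n (cs n), forall n, Q n (cs n.+1),
        forall m i m', i < m -> m <= m' -> cs m' i = cs m i &
        forall n, extracted (tail_from (fun i => cs i.+1 i) n) (tail_from (cs n) n)].
Proof.
move=> H0 Hstep.
have Hex (nc : nat * (nat -> xword A)) : exists c',
    Inv nc.1 nc.2 -> [/\ Inv nc.1.+1 c', refines nc.1 c' nc.2 & Q nc.1 c'].
  have [/Hstep [c' hc']|hc] := classic (Inv nc.1 nc.2); first by exists c'.
  by exists nc.2.
have [f Hf] := choice _ Hex.
pose cs := fix cs n := if n is n'.+1 then f (n', cs n') else D.
have Hinv n : Inv n (cs n) by elim: n => [//|n IH]; case: (Hf (n, cs n) IH).
have Hp n := Hf (n, cs n) (Hinv n).
have Hagree m i m' : i < m -> m <= m' -> cs m' i = cs m i.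
  move=> him; elim: m' => [|m' IH]; first by rewrite leqn0 => /eqP ->.
  rewrite leq_eqVlt => /orP [/eqP <- //|hm].
  have [_ [h _] _] := Hp m'; rewrite -IH //; exact: h (leq_trans him hm).
have Htails n m : n <= m -> extracted (tail_from (cs m) n) (tail_from (cs n) n).
  elim: m => [|m IH]; first by rewrite leqn0 => /eqP ->; apply: extracted_refl.
  rewrite leq_eqVlt => /orP [/eqP <-|hm]; first exact: extracted_refl.
  by have [_ [_ h] _] := Hp m; apply: extracted_trans (h n hm) (IH hm).
exists cs; split=> // [n|n l]; first by case: (Hp n).
apply: (fin_extracted_agree (t := tail_from (cs (n + l).+1) n)).
  by move=> i hi; rewrite /tail_from; apply: Hagree; rewrite // ltnS leq_add2l.
exact: Htails _ _ (leqW (leq_addr _ _)) l.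
Qed.

End Fusion.

Section LemmaC.
Variables (A : finType) (a0 : A).
Implicit Types (c u D E : nat -> xword A).

(* Line lemma: a set large in D contains all substitution instances of some
   variable word of a finite variable span of D (avoidance without trailing
   word, the prefix and pattern combining into one variable word). *)
Lemma large_line D (G : word A -> Prop) : vseq D -> large G D ->
  exists M v, in_vspan D 0 (Some M) v /\ forall a, G (subst_c v a).
Proof.
move=> hD HG; apply: NNPP => Hn.
have Hbad b (p : xword A) y a' : None \in p -> cprefix D b y ->
    ~ (forall a, G (y ++ block_word D b (subst_c p a) ++ trail D false (b + size p) a')).
  move=> hp hy Hall; have [v [hv hva]] := prefix_block_vspan hy hp.
  by apply: Hn; exists (b + size p).-1, v; split=> // a; rewrite hva; have := Hall a; rewrite cats0.
have [r' [h1 h2 h3]] := avoidance a0 hD Hbad.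
by have [z [hz1 hz2]] := HG r' h1 h2; apply: h3 hz2 hz1.
Qed.

Definition escaping (G : word A -> Prop) n c := forall v, in_vspan c 0 (Some n) v ->
  forall z, in_cspan (tail_from c n.+1) 0 None z -> G z -> exists a, ~ G (subst_c v a ++ z).

(* The negation of the conclusion of Lemma C' below. *)
Definition lemmaC_fails (G : word A -> Prop) D := forall u, vseq u -> extracted u D ->
  exists u', [/\ vseq u', extracted u' (tail_from u 1) &
    forall z, in_cspan u' 0 None z -> G z -> exists a, ~ G (subst_c (u 0) a ++ z)].

Lemma lemmaC_fails_of_not (G : word A -> Prop) D :
  ~ (exists u, [/\ vseq u, extracted u D &
       large (fun z => G z /\ forall a, G (subst_c (u 0) a ++ z)) (tail_from u 1)]) ->
  lemmaC_fails G D.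
Proof.
move=> NC u hu huD; apply: NNPP => hn; apply: NC; exists u; split=> // w hw hwe.
apply: NNPP => hz; apply: hn; exists w; split=> // z hzc hGz.
apply: NNPP => hna; apply: hz; exists z; split=> //; split=> // a.
by apply: NNPP => hGa; apply: hna; exists a.
Qed.

Lemma vspan_prefix s n v : in_vspan s 0 (Some n) v -> prefix_below (@subst_x A) s n.+1 v.
Proof. by move/in_vspanE => [ls [_ l2 l3 _ ->]]; exists ls. Qed.

(* One stage of the construction: given c ≤ D, put a line v of G (from the
   tail of c after n) at position n, followed by a tail E chosen so that the
   new sequence is escaping at n.  E is found by refining the tail once for
   each of the finitely many variable words of the span of the first n+1
   words, using the failure of Lemma C'. *)
Section Stage.
Variables (G : word A -> Prop) (D c : nat -> xword A) (n M : nat) (v : xword A).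
Hypotheses (Hfail : lemmaC_fails G D) (hc : vseq c) (hcD : extracted c D)
  (hv : in_vspan (tail_from c n) 0 (Some M) v).

Definition template E := prepend c n (scons v E).
Let E0 := tail_from (tail_from c n) M.+1.

Lemma template_vseq E : vseq E -> vseq (template E).
Proof.
move=> hE; apply: vseq_prepend => //; apply: vseq_scons hE.
by apply: vspan_var hv => i; apply: hc.
Qed.

Lemma template_refines E : extracted E E0 -> refines n (template E) c.
Proof.
move=> hE; split; first by move=> i hi; apply: prepend_lt.
by move=> k hk; apply: prepend_extracted hk; apply: scons_extracted hv hE.
Qed.

Lemma template_extracted E : extracted E E0 -> extracted (template E) D.
Proof. by move=> /template_refines /refines_extracted; apply. Qed.

Lemma template_agree E E' i : i <= n -> template E i = template E' i.
Proof.
rewrite /template /prepend; case: ltnP => // hni hin.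
by have -> : i - n = 0 by apply/eqP; rewrite subn_eq0.
Qed.

Lemma template_tail E : tail_from (template E) n.+1 = E.
Proof.
by rewrite /template -addn1 -tail_from_add prepend_tail.
Qed.

Lemma template_escape (L : seq (xword A)) : exists E, [/\ vseq E, extracted E E0 &
  forall v', v' \in L -> in_vspan (template E0) 0 (Some n) v' ->
    forall z, in_cspan E 0 None z -> G z -> exists a, ~ G (subst_c v' a ++ z)].
Proof.
elim: L => [|v' L [E1 [hE1 hE1E IH]]].
  by exists E0; split=> //; [move=> i; apply: hc | apply: extracted_refl].
have [hv'|hv'] := classic (in_vspan (template E0) 0 (Some n) v'); last first.
  by exists E1; split=> // w; rewrite inE => /orP [/eqP -> /hv' //|]; apply: IH.
have hv1 : in_vspan (template E1) 0 (Some n) v'.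
  by apply: vspan_agree hv' => i; apply: template_agree.
have hu : vseq (scons v' E1) := vseq_scons (vspan_var (template_vseq hE1) hv1) hE1.
have huD : extracted (scons v' E1) D.
  apply: extracted_trans (template_extracted hE1E); apply: scons_extracted hv1 _.
  by rewrite template_tail; apply: extracted_refl.
have [u' [hu' hu'E1 Hu']] := Hfail hu huD.
exists u'; split=> //; first exact: extracted_trans hu'E1 hE1E.
move=> w; rewrite inE => /orP [/eqP -> _|hw hw'] z hz; first exact: Hu'.
by apply: IH => //; apply: cspan_extracted hu'E1 hz.
Qed.

End Stage.

Lemma escape_stage D (G : word A -> Prop) : large G D -> lemmaC_fails G D ->
  forall n c, vseq c -> extracted c D ->
  exists c', [/\ vseq c', refines n c' c, (forall a, G (subst_c (c' n) a)) & escaping G n c'].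
Proof.
move=> HG Hfail n c hc hcD.
have hL : large G (tail_from c n).
  by apply: large_extracted HG (extracted_trans (extracted_tail c n) hcD).
have [M [v [hv hvG]]] := large_line (fun i => hc (n + i)) hL.
pose E0 := tail_from (tail_from c n) M.+1.
pose L := prefixes (@subst_x A) (None :: map Some (enum A)) (template c n v E0) n.+1.
have [E [hE hEE HE]] := template_escape Hfail hc hcD hv L.
exists (template c n v E); split.
- exact: (template_vseq hc hv hE).
- exact: (template_refines hv hEE).
- by move=> a; rewrite /template /prepend ltnn subnn.
move=> w hw z; rewrite template_tail => hz HGz.
have hw0 : in_vspan (template c n v E0) 0 (Some n) w.
  by apply: vspan_agree hw => i; apply: template_agree.
apply: HE => //; apply: prefixes_complete (vspan_prefix hw0) => -[b|]; last exact: mem_head.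
by rewrite inE map_f ?mem_enum ?orbT.
Qed.

(* For a fusion of escaping stages, no pattern can be completed in G by the
   diagonal r with a trailing word r_e(a'): that word lies in G and in the
   tail after e - 1 of stage e, where the prefix followed by the pattern is a
   variable word that escapes. *)
Lemma diagonal_no_pattern (G : word A -> Prop) (cs : nat -> nat -> xword A) :
  (forall n, (forall a, G (subst_c (cs n.+1 n) a)) /\ escaping G n (cs n.+1)) ->
  (forall m i m', i < m -> m <= m' -> cs m' i = cs m i) ->
  (forall n, extracted (tail_from (fun i => cs i.+1 i) n) (tail_from (cs n) n)) ->
  forall b (p : xword A) y a', None \in p -> cprefix (fun i => cs i.+1 i) b y ->
  let r i := cs i.+1 i in
  ~ (forall a, G (y ++ block_word r b (subst_c p a) ++ trail r true (b + size p) a')).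
Proof.
move=> cQ cag cT b p y a' hp hy r Hall; have [v [hv hva]] := prefix_block_vspan hy hp.
have hsz : 0 < b + size p by rewrite addn_gt0 orbC lt0n size_eq0; case: (p) hp.
move: hv Hall; rewrite -(prednK hsz); set e := (b + size p).-1 => hv Hall.
have hv' : in_vspan (cs e.+1) 0 (Some e) v.
  by apply: vspan_agree hv => i hi; symmetry; apply: cag.
have hz : in_cspan (tail_from (cs e.+1) e.+1) 0 None (subst_c (r e.+1) a').
  apply: cspan_extracted (cT e.+1) _; apply/in_cspanE; exists [:: (0, a')].
  by split=> //; rewrite /cword /tail_from /= addn0 cats0.
have [a ha] := proj2 (cQ e) v hv' _ hz (proj1 (cQ e.+1) a').
by apply: ha; rewrite hva -catA; apply: Hall.
Qed.

(* Lemma C': if G is large in D, some u ≤ D has the set of z ∈ G with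
   u_0(a) z ∈ G for all a large in the tail of u after 0.  Otherwise, fusing
   the stages of [escape_stage] yields r ≤ D to which the avoidance lemma
   applies with the trailing word, contradicting the largeness of G. *)
Theorem lemmaC D (G : word A -> Prop) : vseq D -> large G D ->
  exists u, [/\ vseq u, extracted u D &
    large (fun z => G z /\ forall a, G (subst_c (u 0) a ++ z)) (tail_from u 1)].
Proof.
move=> hD HG; apply: NNPP => /lemmaC_fails_of_not Hfail.
have step n c : vseq c /\ extracted c D -> exists c', [/\ vseq c' /\ extracted c' D,
    refines n c' c & (forall a, G (subst_c (c' n) a)) /\ escaping G n c'].
  move=> [hc hcD]; have [c' [h1 h2 h3 h4]] := escape_stage HG Hfail n hc hcD.
  by exists c'; split=> //; split=> //; apply: refines_extracted h2 hcD.
have [cs [c0 cinv cQ cag cT]] := fusion (conj hD (extracted_refl D)) step.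
have hr : vseq (fun i => cs i.+1 i) by move=> i; case: (cinv i.+1) => + _; apply.
have [r' [h1 h2 h3]] := avoidance a0 hr (diagonal_no_pattern cQ cag cT).
have rD : extracted (fun i => cs i.+1 i) D by have := cT 0; rewrite c0.
by have [z [hz1 hz2]] := HG r' h1 (extracted_trans h2 rD); apply: h3 hz2 hz1.
Qed.

End LemmaC.

Section Main.
Variable A : finType.
Implicit Types (c : nat -> xword A).

(* refined E c n = E ∩ E_F with F the words of the constant span of
   c_0, ..., c_{n-1} together with the empty word, defined recursively by
   refined E c n.+1 = refined E c n ∩ ⋂_a (refined E c n)_{c_n(a)}. *)
Fixpoint refined (E : word A -> Prop) c n : word A -> Prop :=
  if n is n'.+1 then fun z => refined E c n' z /\ forall a, refined E c n' (subst_c (c n') a ++ z)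
  else E.

Lemma refined_agree E c c' n : (forall i, i < n -> c i = c' i) ->
  forall z, refined E c n z -> refined E c' n z.
Proof.
elim: n => [|n IH] H z //= [h1 h2].
have H' i : i < n -> c i = c' i by move=> hi; apply/H/ltnW.
by rewrite -H //; split=> [|a]; [apply: IH H' _ h1 | apply: IH H' _ (h2 a)].
Qed.

Lemma refined_sound E c n z : refined E c n z -> E z /\ forall f, cprefix c n f -> E (f ++ z).
Proof.
elim: n z => [|n IH] z /=; first by move=> hz; split=> // f [[|q ls] [h1 h2 ->]].
move=> [/IH [hz IH1] h2]; split=> // f /prefix_below_split [/IH1 //|[f' [a [hf ->]]]].
by rewrite -catA; apply: (IH _ (h2 a)).2.
Qed.

Lemma cspan_prefix c n f : in_cspan c 0 (Some n) f -> cprefix c n.+1 f.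
Proof.
by move=> [ls [_ l2 l3 ->]]; exists ls; split=> //; rewrite -sorted_pairwise //; apply: ltn_trans.
Qed.

(* One stage of the main construction: Lemma C' applied to the tail of c after
   n, prepended with c_0, ..., c_{n-1}, moves the largeness one step further. *)
Lemma refine_stage (a0 : A) E n c : vseq c -> large (refined E c n) (tail_from c n) ->
  exists c', [/\ vseq c', refines n c' c & large (refined E c' n.+1) (tail_from c' n.+1)].
Proof.
move=> hc HL; have [u [hu huc Hu]] := lemmaC a0 (fun i => hc (n + i)) HL.
have agree i : i < n -> prepend c n u i = c i by apply: prepend_lt.
exists (prepend c n u); split.
- exact: vseq_prepend.
- by split=> // k; apply: prepend_extracted.
have -> : tail_from (prepend c n u) n.+1 = tail_from u 1.
  by rewrite -addn1 -tail_from_add prepend_tail.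
apply: large_mono Hu => z [h1 h2]; split=> [|a].
  by apply: refined_agree h1 => i /agree.
have -> : prepend c n u n = u 0 by rewrite /prepend ltnn subnn.
by apply: refined_agree (h2 a) => i /agree.
Qed.

End Main.

(* Lemma 2.10: iterating [refine_stage] and fusing the stages, the diagonal w
   satisfies: refined E w n.+1 = E ∩ E_{F_n} is large in the tail of w after n. *)
Theorem lemma2p10 (A : finType) (hA : 0 < #|A|)
    (E : word A -> Prop) (s : nat -> xword A) :
  vseq s -> large E s ->
  exists w : nat -> xword A,
    [/\ vseq w, extracted w s &
        forall n : nat,
          large (fun z => E z /\ shiftset E (in_cspan w 0 (Some n)) z)
                (fun i => w (n.+1 + i))].
Proof.
move=> hs HE; have [a0 _] := card_gt0P hA.
pose Inv n c := [/\ vseq c, extracted c s & large (refined E c n) (tail_from c n)].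
have step n c : Inv n c -> exists c',
    [/\ Inv n.+1 c', refines n c' c & large (refined E c' n.+1) (tail_from c' n.+1)].
  move=> [hc hcs HL]; have [c' [hc' hr HL']] := refine_stage a0 hc HL.
  by exists c'; split=> //; split=> //; apply: refines_extracted hr hcs.
have [cs [c0 cinv cQ cag cT]] := fusion (And3 hs (extracted_refl s) HE : Inv 0 s) step.
exists (fun i => cs i.+1 i); split.
- by move=> i; case: (cinv i.+1).
- by have := cT 0; rewrite c0.
move=> n; apply: large_mono (large_extracted (cQ n) (cT n.+1)) => z hz.
have [hE hF] := refined_sound (refined_agree (fun i hi => cag i.+1 i n.+1 (ltnSn i) hi) hz).
by split=> // f /cspan_prefix; apply: hF.
Qed.
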